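(* Let $P$ be a poset and $\Delta^\varphi=\{p_0<\dots<p_n\}$ a nondegenerate simplex of $N(P)$. The inclusion $\|\Delta^\varphi\|_P\hookrightarrow\varphi_P^{-1}(\{p_0,\dots,p_n\})$ is a filtered homotopy equivalence.
   Context: $\varphi_P:\|N(P)\|\to P$ sends a point $(\{q_0<\dots<q_m\},t)$, $t$ in the interior of $\Delta^m$, to $q_m$. $\|\Delta^\varphi\|_P$ is the realization of the simplex $\{p_0<\dots<p_n\}$ as a subspace of $\|N(P)\|$, and both it and $\varphi_P^{-1}(\{p_0,\dots,p_n\})\subseteq\|N(P)\|$ are filtered over $P$ by the restriction of $\varphi_P$. A filtered homotopy equivalence is a map $f$ commuting with the maps to $P$ admitting a filtered map $g$ in the other direction such that $f\circ g$ and $g\circ f$ are homotopic to the identities through homotopies $H:A\times[0,1]\to B$ commuting with the maps to $P$ (with $A\times[0,1]$ filtered via the projection to $A$). *)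

From HB Require Import structures.
From mathcomp Require Import all_boot all_order all_algebra.
From mathcomp Require Import all_classical all_reals topology normedtype.
Set Implicit Arguments. Unset Strict Implicit. Unset Printing Implicit Defensive.
Import Order.TTheory GRing.Theory Num.Theory numFieldNormedType.Exports.
Local Open Scope classical_set_scope.
Local Open Scope ring_scope.

(* The geometric realization ||N(P)|| of the nerve of a poset P is modelled
   inside the type of functions P -> R (barycentric coordinates). *)
Definition realiz (d : Order.disp_t) (P : porderType d) (R : realType) : Type :=
  P -> R.

Definition is_chain (d : Order.disp_t) (P : porderType d) (s : seq P) : Prop :=
  forall p q, p \in s -> q \in s -> (p >=< q)%O.

Definition in_simplex (d : Order.disp_t) (P : porderType d) (R : realType)
  (s : seq P) (t : realiz P R) : Prop :=
  [/\ forall p, 0 <= t p,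
      forall p, p \notin s -> t p = 0
    & \sum_(p <- undup s) t p = 1].

Definition realization (d : Order.disp_t) (P : porderType d) (R : realType)
  : set (realiz P R) :=
  [set t | exists s, is_chain s /\ in_simplex s t].

(* weak (CW) topology: U is open iff its trace on every closed simplex is open
   for the Euclidean topology of that simplex *)
Definition wopen (d : Order.disp_t) (P : porderType d) (R : realType)
  (U : set (realiz P R)) : Prop :=
  forall s, is_chain s -> forall t, in_simplex s t -> U t ->
    exists2 e : R, 0 < e &
      forall t', in_simplex s t' -> (forall p, p \in s -> `|t' p - t p| < e) ->
        U t'.

Lemma wopenT (d : Order.disp_t) (P : porderType d) (R : realType) :
  wopen [set: realiz P R].
Proof. by move=> s _ t _ _; exists 1 => //. Qed.

Lemma wopenI (d : Order.disp_t) (P : porderType d) (R : realType) :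
  setI_closed (@wopen d P R).
Proof.
move=> U V oU oV s cs t st [Ut Vt].
have [e1 e10 H1] := oU s cs t st Ut.
have [e2 e20 H2] := oV s cs t st Vt.
exists (Num.min e1 e2); first by rewrite lt_min e10 e20.
move=> t' st' H; split.
  by apply: H1 => // p ps; have := H p ps; rewrite lt_min => /andP[].
by apply: H2 => // p ps; have := H p ps; rewrite lt_min => /andP[].
Qed.

Lemma wopen_bigU (d : Order.disp_t) (P : porderType d) (R : realType)
  (I : Type) (f : I -> set (realiz P R)) :
  (forall i, wopen (f i)) -> wopen (\bigcup_i f i).
Proof.
move=> hf s cs t st [i _ fit].
have [e e0 H] := hf i s cs t st fit.
by exists e => // t' st' H'; exists i => //; apply: H.
Qed.

HB.instance Definition _ (d : Order.disp_t) (P : porderType d) (R : realType) :=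
  Choice.on (realiz P R).
HB.instance Definition _ (d : Order.disp_t) (P : porderType d) (R : realType) :=
  isOpenTopological.Build (realiz P R) (@wopenT d P R) (@wopenI d P R)
    (@wopen_bigU d P R).

(* phi_P t = p : p is the largest vertex of the support of t, i.e. the last
   vertex q_m of the open simplex containing t *)
Definition phiP (d : Order.disp_t) (P : porderType d) (R : realType)
  (t : realiz P R) (p : P) : Prop :=
  t p != 0 /\ forall q, t q != 0 -> (q <= p)%O.

Definition simplex_real (d : Order.disp_t) (P : porderType d) (R : realType)
  (s : seq P) : set (realiz P R) := [set t | in_simplex s t].

Definition phi_preim (d : Order.disp_t) (P : porderType d) (R : realType)
  (s : seq P) : set (realiz P R) :=
  [set t | realization t /\ exists2 p, p \in s & phiP t p].

Definition filtered_map (d : Order.disp_t) (P : porderType d) (R : realType)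
  (A B : set (realiz P R)) (f : realiz P R -> realiz P R) : Prop :=
  [/\ {within A, continuous f},
      forall a, A a -> B (f a)
    & forall a p, A a -> phiP a p -> phiP (f a) p].

Definition filtered_homotopic (d : Order.disp_t) (P : porderType d)
  (R : realType) (A B : set (realiz P R)) (f g : realiz P R -> realiz P R)
  : Prop :=
  exists H : realiz P R * R -> realiz P R,
    [/\ {within A `*` (`[0, 1] : set R), continuous H},
        forall a s, A a -> s \in `[0, 1] -> B (H (a, s)),
        forall a s p, A a -> s \in `[0, 1] -> phiP a p -> phiP (H (a, s)) p,
        forall a, A a -> H (a, 0) = f a
      & forall a, A a -> H (a, 1) = g a].

Definition filtered_homotopy_equivalence (d : Order.disp_t) (P : porderType d)
  (R : realType) (A B : set (realiz P R)) (f : realiz P R -> realiz P R)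
  : Prop :=
  filtered_map A B f /\
  exists g, [/\ filtered_map B A g,
                filtered_homotopic A A (g \o f) id
              & filtered_homotopic B B (f \o g) id].

From Pilot Require Import Defs.
From HB Require Import structures.
From mathcomp Require Import all_boot all_order all_algebra.
From mathcomp Require Import all_classical all_reals topology normedtype.
From mathcomp Require Import lra.

Import Order.TTheory GRing.Theory Num.Theory numFieldNormedType.Exports.
Local Open Scope classical_set_scope.
Local Open Scope ring_scope.
Set Implicit Arguments. Unset Strict Implicit. Unset Printing Implicit Defensive.

(* The homotopy is H(t, u) = (1 - u) r(t) + u t, where r(t) is t restricted to
   the vertices of s and divided by its mass m(t) = sum_(q in s) t(q); r = H(-, 0)
   retracts phi_P^-1(s) onto the closed simplex.  On phi_P^-1(s) the mass is
   positive since the top vertex phi_P(t) lies in s, and H keeps t(phi_P t) > 0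
   without creating new nonzero coordinates, so phi_P(H(t, u)) = phi_P(t).
   On every closed simplex H is a rational function of the barycentric
   coordinates, which gives continuity for the weak topology; in the time
   variable one needs the tube lemma over compact intervals of [0, 1]. *)

Lemma big_uniq_support (T : eqType) (V : nmodType) (r1 r2 : seq T) (F : T -> V) :
  uniq r1 -> uniq r2 -> (forall p, p \notin r1 -> F p = 0) ->
  (forall p, p \notin r2 -> F p = 0) ->
  \sum_(p <- r1) F p = \sum_(p <- r2) F p.
Proof.
move=> u1 u2 F1 F2.
have restrict (r r' : seq T) : (forall p, p \notin r' -> F p = 0) ->
    \sum_(p <- r) F p = \sum_(p <- [seq p <- r | p \in r']) F p.
  move=> Fr'; rewrite big_filter [LHS](bigID (mem r')) /=.
  by rewrite [X in _ + X]big1 ?addr0 // => p /Fr'.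
rewrite (restrict _ _ F2) (restrict r2 _ F1); apply: perm_big.
by apply: uniq_perm; rewrite ?filter_uniq // => p; rewrite !mem_filter andbC.
Qed.

Lemma convex_comb_gt0 (R : realFieldType) (a b u : R) :
  0 < a -> 0 < b -> 0 <= u <= 1 -> 0 < (1 - u) * a + u * b.
Proof. by move=> a0 b0 /andP[u0 u1]; nra. Qed.

Section chains.
Context {d : Order.disp_t} {P : porderType d}.

Lemma sorted_lt_chain (s : seq P) : sorted <%O s -> is_chain s.
Proof.
elim: s => [|x r IH] //= x_r.
have x_lt_r : all (<%O x) r by apply: order_path_min x_r; exact: lt_trans.
have cr := IH (path_sorted x_r).
move=> p q; rewrite !in_cons => /orP[/eqP-> | pr] /orP[/eqP-> | qr].
- exact: comparablexx.
- by rewrite lt_comparable // (allP x_lt_r).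
- by rewrite comparable_sym lt_comparable // (allP x_lt_r).
- exact: cr.
Qed.

Lemma chain_has_max (r : seq P) (f : pred P) : is_chain r -> has f r ->
  exists2 p, p \in r & f p /\ {in r, forall q, f q -> (q <= p)%O}.
Proof.
elim: r => [|x r IH] //= cxr.
have cr : is_chain r by move=> p q pr qr; apply: cxr; rewrite in_cons ?pr ?qr orbT.
case: (boolP (has f r)) => [/(IH cr)[p pr [fp p_max]] _ | /hasPn nfr /orP[fx|] //];
  last first.
  exists x; rewrite ?mem_head //; split => // q.
  by rewrite in_cons => /orP[/eqP-> // | /nfr/negbTE->].
have x_cmp_p : (x >=< p)%O by apply: cxr; rewrite in_cons ?eqxx ?pr ?orbT.
case: (boolP (f x && (p <= x)%O)) => [/andP[fx px] | x_not_max].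
  exists x; rewrite ?mem_head //; split => // q.
  by rewrite in_cons => /orP[/eqP-> // | qr fq]; exact: le_trans (p_max q qr fq) px.
exists p; rewrite ?in_cons ?pr ?orbT //; split => // q.
rewrite in_cons => /orP[/eqP-> fx | ]; last exact: p_max.
by case/orP: x_cmp_p => // px; rewrite fx px in x_not_max.
Qed.

End chains.

Section simplex_nbhs.
Context {d : Order.disp_t} {P : porderType d} {R : realType}.
Implicit Types (c : seq P) (t : realiz P R).

Definition simplex_nbhs c t : set_system (realiz P R) :=
  filter_from [set e : R | 0 < e]
    (fun e => [set t' | in_simplex c t' /\ forall p, p \in c -> `|t' p - t p| < e]).

Global Instance simplex_nbhs_filter c t : Filter (simplex_nbhs c t).
Proof.
apply: filter_from_filter; first by exists 1; rewrite /= ltr01.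
move=> e1 e2 e10 e20; exists (Num.min e1 e2); first by rewrite /= lt_min e10 e20.
by move=> t' [ct' lt']; split; split => // p pc; have := lt' p pc;
  rewrite lt_min => /andP[].
Qed.

Lemma simplex_nbhs_singleton c t (Q : set (realiz P R)) :
  in_simplex c t -> simplex_nbhs c t Q -> Q t.
Proof. by move=> ct [e /= e0]; apply; split => // p _; rewrite subrr normr0. Qed.

Lemma near_in_simplex c t : \forall t' \near simplex_nbhs c t, in_simplex c t'.
Proof. by exists 1; rewrite /= ?ltr01 // => t' []. Qed.

Lemma cvg_simplex_nbhs_coord c t p :
  in_simplex c t -> (fun t' => t' p) @ simplex_nbhs c t --> t p.
Proof.
move=> [_ t_c _]; apply/cvgrPdist_lt => e e0.
exists e => // t' [[_ t'_c _] lt']; case: (boolP (p \in c)) => pc.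
  by rewrite distrC; apply: lt'.
by rewrite t_c // t'_c // subrr normr0.
Qed.

Lemma open_simplexP (U : set (realiz P R)) :
  open U <-> forall c t, is_chain c -> in_simplex c t -> U t -> simplex_nbhs c t U.
Proof.
rewrite -[open U]/(Defs.wopen U); split=> [oU c t cc ct Ut | nU c cc t ct Ut].
  by have [e e0 eU] := oU c cc t ct Ut; exists e => // t' [ct' lt']; apply: eU.
by have [e /= e0 eU] := nU c t cc ct Ut; exists e => // t' ct' lt'; apply: eU.
Qed.

Lemma near_open_simplex (T : Type) (F : set_system T) {FF : Filter F}
    (g : T -> realiz P R) c x (W : set (realiz P R)) :
  open W -> is_chain c -> in_simplex c x -> W x ->
  (\forall y \near F, in_simplex c (g y)) ->
  (forall p, (fun y => g y p) @ F --> x p) ->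
  \forall y \near F, W (g y).
Proof.
move=> oW cc cx Wx cg gx; have [e e0 eW] := oW c cc x cx Wx.
have close : \forall y \near F, forall p : seq_sub c, `|x (val p) - g y (val p)| < e.
  by apply: filter_forall => p; move/cvgrPdist_lt : (gx (val p)); apply.
apply: filterS (filterI cg close) => y [cgy lt]; apply: eW => // p pc.
by rewrite distrC; apply: (lt (SeqSub pc)).
Qed.

End simplex_nbhs.

Section simplexwise_continuity.
Context {d : Order.disp_t} {P : porderType d} {R : realType}.
Variable D : set (realiz P R).
Hypothesis openD : open D.

Lemma continuous_simplexwise (g : realiz P R -> realiz P R) t0 :
  (forall c t, is_chain c -> in_simplex c t -> D t -> in_simplex c (g t)) ->
  (forall c t p, is_chain c -> in_simplex c t -> D t ->
     (fun t' => g t' p) @ simplex_nbhs c t --> g t p) ->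
  D t0 -> {for t0, continuous g}.
Proof.
move=> g_simplex g_cvg Dt0 V; rewrite nbhsE => -[W [oW Wgt0] WV].
have oU : open (D `&` g @^-1` W).
  apply/open_simplexP => c t cc ct [Dt Wgt].
  have nearD : \forall t' \near simplex_nbhs c t, D t'.
    exact: (open_simplexP D).1 openD c t cc ct Dt.
  have near_cg : \forall t' \near simplex_nbhs c t, in_simplex c (g t').
    apply: filterS (filterI nearD (near_in_simplex c t)) => t' [Dt' ct'].
    exact: g_simplex.
  have nearW : \forall t' \near simplex_nbhs c t, W (g t').
    exact: near_open_simplex oW cc (g_simplex c t cc ct Dt) Wgt near_cg
      (fun p => g_cvg c t p cc ct Dt).
  exact: filterI nearD nearW.
by apply: filterS (open_nbhs_nbhs (conj oU (conj Dt0 Wgt0))) => t [_ /WV].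
Qed.

Variable h : realiz P R * R -> realiz P R.
Hypothesis h_simplex : forall c t u, is_chain c -> in_simplex c t -> D t ->
  0 <= u <= 1 -> in_simplex c (h (t, u)).
(* Pairs are taken in the order (u, t) expected by [near_covering_within]. *)
Hypothesis h_cvg : forall c t u p, is_chain c -> in_simplex c t -> D t ->
  (fun q : R * realiz P R => h (q.2, q.1) p)
    @ filter_prod (nbhs u) (simplex_nbhs c t) --> h (t, u) p.

Lemma near_homotopy_open c t u (W : set (realiz P R)) :
  open W -> is_chain c -> in_simplex c t -> D t -> 0 <= u <= 1 -> W (h (t, u)) ->
  \forall q \near filter_prod (nbhs u) (simplex_nbhs c t),
    0 <= q.1 <= 1 -> W (h (q.2, q.1)).
Proof.
move=> oW cc ct Dt u01 Wh.
pose I01 := [set q : R * realiz P R | 0 <= q.1 <= 1].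
suff : \forall q \near within I01 (filter_prod (nbhs u) (simplex_nbhs c t)),
    W (h (q.2, q.1)) by [].
apply: (near_open_simplex (F := within I01 (filter_prod (nbhs u) (simplex_nbhs c t)))
  (g := fun q => h (q.2, q.1)) oW cc (h_simplex cc ct Dt u01) Wh).
  have nearD : \forall t' \near simplex_nbhs c t, D t' /\ in_simplex c t'.
    exact: filterI ((open_simplexP D).1 openD c t cc ct Dt) (near_in_simplex c t).
  suff : \forall q \near filter_prod (nbhs u) (simplex_nbhs c t),
    I01 q -> in_simplex c (h (q.2, q.1)) by [].
  by apply: filterS (filter_prod2 (F := nbhs u) nearD) => q [Dq cq] q01; apply: h_simplex.
by move=> p; apply: cvg_within_filter; exact: h_cvg.
Qed.

(* Tube lemma: compactness of [K] makes the neighbourhoods given by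
   [near_homotopy_open] uniform in [u]. *)
Lemma open_tube (K : set R) (W : set (realiz P R)) :
  compact K -> K `<=` `[0, 1] -> open W ->
  open [set t | D t /\ K `<=` (fun u => W (h (t, u)))].
Proof.
move=> cK K01 oW; apply/open_simplexP => c t cc ct [Dt KW].
have nearK : \forall t' \near simplex_nbhs c t, K `<=` (fun u => W (h (t', u))).
  move/compact_near_coveringP/near_covering_withinP : cK; apply => u Ku.
  have u01 : 0 <= u <= 1 by have := K01 u Ku; rewrite /= in_itv.
  apply: filterS (near_homotopy_open oW cc ct Dt u01 (KW u Ku)) => -[u' t'] /= Wh Ku'.
  by apply: Wh; have := K01 u' Ku'; rewrite /= in_itv.
exact: filterI ((open_simplexP D).1 openD c t cc ct Dt) nearK.
Qed.

Lemma continuous_homotopy_simplexwise :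
  {within (@realization d P R `&` D) `*` `[0, 1], continuous h}.
Proof.
apply/subspace_continuousP => -[t0 u0] [/= [[c [cc ct0]] Dt0]].
rewrite in_itv /= => u01 V; rewrite /from_subspace nbhsE => -[W [oW Wh] WV].
have [e e0 eW] : exists2 e : R, 0 < e &
    forall u, 0 <= u <= 1 -> `|u0 - u| < e -> W (h (t0, u)).
  have [[A B] /= [[e /= e0 eA] nB] AB] := near_homotopy_open oW cc ct0 Dt0 u01 Wh.
  exists e => // u u01' ue; apply: (AB (u, t0)) => //; split; first exact: eA.
  exact: simplex_nbhs_singleton ct0 nB.
pose K := `[u0 - e / 2, u0 + e / 2] `&` `[0, 1].
have cK : compact K.
  by apply: compact_closedI; [exact: segment_compact | exact: interval_closed].
pose U := [set t | D t /\ K `<=` (fun u => W (h (t, u)))].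
have oU : open U by apply: open_tube cK (@subIsetr _ _ _) oW.
have Ut0 : U t0.
  split => // u [/=]; rewrite !in_itv /= => /andP[u1 u2] u01'; apply: eW => //.
  rewrite ltr_norml; apply/andP; split; lra.
have nU : nbhs (t0, u0) (U `*` ball u0 (e / 2)).
  exists (U, ball u0 (e / 2)) => //; split; first exact: open_nbhs_nbhs.
  by apply: nbhsx_ballx; rewrite divr_gt0.
apply: filterS nU => -[t u] [/= [_ KW] ue] [_]; rewrite in_itv /= => u01'.
apply/WV/KW; split => //=; rewrite in_itv /=.
move: ue; rewrite -ball_normE /ball_ /= ltr_norml => /andP[? ?]; apply/andP; split; lra.
Qed.

End simplexwise_continuity.

Section retraction.
Context {d : Order.disp_t} {P : porderType d} {R : realType}.
Variable s : seq P.
Implicit Types (c : seq P) (t : realiz P R) (u : R) (p : P).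

Definition mass t : R := \sum_(q <- undup s) t q.

Definition retract_homotopy (x : realiz P R * R) : realiz P R := fun p =>
  (1 - x.2) * (if p \in s then x.1 p / mass x.1 else 0) + x.2 * x.1 p.

Lemma mass_gt0 t p : (forall q, 0 <= t q) -> p \in s -> t p != 0 -> 0 < mass t.
Proof.
move=> t_ge0 ps tp; rewrite /mass (bigD1_seq p) ?mem_undup ?undup_uniq //=.
by rewrite ltr_pwDl ?sumr_ge0 // lt_def tp t_ge0.
Qed.

Lemma cvg_mass (X : Type) (F : set_system X) {FF : Filter F} (k : X -> realiz P R) t :
  (forall q, (fun x => k x q) @ F --> t q) -> (fun x => mass (k x)) @ F --> mass t.
Proof. by move=> kt; apply: cvg_big => [|q _]; [exact: add_continuous | exact: kt]. Qed.

Lemma open_mass_gt0 : open [set t | 0 < mass t].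
Proof.
apply/open_simplexP => c t _ ct mt_gt0.
have mt : mass @ simplex_nbhs c t --> mass t.
  by apply: cvg_mass => q; exact: cvg_simplex_nbhs_coord.
exact: cvgr_gt mt _ mt_gt0.
Qed.

Lemma retract_homotopy_eq0 t u p : t p = 0 -> retract_homotopy (t, u) p = 0.
Proof.
by move=> tp; rewrite /retract_homotopy /= tp !mulr0 addr0; case: ifP; rewrite ?mul0r ?mulr0.
Qed.

Lemma retract_homotopy1 t : retract_homotopy (t, 1) = t.
Proof. by apply/funext => p; rewrite /retract_homotopy /= subrr mul0r add0r mul1r. Qed.

Section positive_mass.
Variables (t : realiz P R) (u : R).
Hypotheses (t_ge0 : forall q, 0 <= t q) (mt_gt0 : 0 < mass t) (u01 : 0 <= u <= 1).

Lemma retract_homotopy_ge0 p : 0 <= retract_homotopy (t, u) p.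
Proof.
have [u0 u1] := andP u01; rewrite /retract_homotopy /=.
rewrite addr_ge0 ?mulr_ge0 ?subr_ge0 //; case: ifP => // _.
by rewrite divr_ge0 // ltW.
Qed.

Lemma in_simplex_retract_homotopy c :
  in_simplex c t -> in_simplex c (retract_homotopy (t, u)).
Proof.
move=> [_ t_c sum_t]; split.
- exact: retract_homotopy_ge0.
- by move=> p /t_c; apply: retract_homotopy_eq0.
rewrite big_split /= -!mulr_sumr sum_t mulr1.
suff -> : \sum_(p <- undup c) (if p \in s then t p / mass t else 0) = 1.
  by rewrite mulr1 subrK.
rewrite (@big_uniq_support _ _ _ (undup s)) ?undup_uniq //; last 2 first.
- by move=> p; rewrite mem_undup => /t_c ->; case: ifP; rewrite ?mul0r.
- by move=> p; rewrite mem_undup => /negbTE ->.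
rewrite (eq_big_seq (fun p => t p / mass t)) => [|p]; last by rewrite mem_undup => ->.
by rewrite -mulr_suml divff // lt0r_neq0.
Qed.

Lemma retract_homotopy_phiP p : p \in s -> phiP t p -> phiP (retract_homotopy (t, u)) p.
Proof.
move=> ps [tp tp_max]; split; last first.
  move=> q; apply: contra_neqT => q_gt_p; apply: retract_homotopy_eq0.
  by apply/eqP; apply: contraNT q_gt_p; exact: tp_max.
have tp_gt0 : 0 < t p by rewrite lt_def tp t_ge0.
by rewrite /retract_homotopy /= ps lt0r_neq0 // convex_comb_gt0 // divr_gt0.
Qed.

End positive_mass.

Lemma in_simplex_retract t :
  (forall q, 0 <= t q) -> 0 < mass t -> in_simplex s (retract_homotopy (t, 0)).
Proof.
move=> t_ge0 mt_gt0; split.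
- by move=> p; apply: retract_homotopy_ge0; rewrite // lexx ler01.
- by move=> p /negbTE ps; rewrite /retract_homotopy /= ps !mul0r mulr0 addr0.
rewrite (eq_big_seq (fun p => t p / mass t)) => [|p].
  by rewrite -mulr_suml divff // lt0r_neq0.
by rewrite mem_undup /retract_homotopy /= => ->; rewrite subr0 mul1r mul0r addr0.
Qed.

Lemma cvg_retract_homotopy (X : Type) (F : set_system X) {FF : Filter F}
    (k : X -> realiz P R) (v : X -> R) t u p :
  (forall q, (fun x => k x q) @ F --> t q) -> v @ F --> u -> 0 < mass t ->
  (fun x => retract_homotopy (k x, v x) p) @ F --> retract_homotopy (t, u) p.
Proof.
move=> kt vu mt_gt0; rewrite /retract_homotopy /=.
apply: cvgD; apply: cvgM => //; first by apply: cvgB => //; exact: cvg_cst.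
case: ifP => _; last exact: cvg_cst.
by apply: cvgM => //; apply: cvgV; [rewrite lt0r_neq0 | exact: cvg_mass].
Qed.

End retraction.

Section phi_preim.
Context {d : Order.disp_t} {P : porderType d} {R : realType}.
Variable s : seq P.
Implicit Types (t : realiz P R) (u : R) (p : P).

Lemma phiP_uniq t p q : phiP t p -> phiP t q -> p = q.
Proof. by move=> [tp p_max] [tq q_max]; apply/le_anti; rewrite p_max ?q_max. Qed.

Lemma phi_preimP t : phi_preim s t ->
  [/\ forall q, 0 <= t q, 0 < mass s t & forall p, phiP t p -> p \in s].
Proof.
move=> [[c [_ [t_ge0 _ _]]] [p ps [tp p_max]]]; split => //.
- exact: mass_gt0 ps tp.
- by move=> q /(phiP_uniq (conj tp p_max)) <-.
Qed.

Lemma retract_homotopy_phi_preim t u p : phi_preim s t -> 0 <= u <= 1 ->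
  phiP t p -> phiP (retract_homotopy s (t, u)) p.
Proof.
move=> /phi_preimP[t_ge0 mt_gt0 phi_s] u01 tp.
by apply: retract_homotopy_phiP => //; exact: phi_s.
Qed.

Lemma phi_preim_retract_homotopy t u : phi_preim s t -> 0 <= u <= 1 ->
  phi_preim s (retract_homotopy s (t, u)).
Proof.
move=> Bt u01; have [t_ge0 mt_gt0 _] := phi_preimP Bt.
case: Bt => [[c [cc ct]] [p ps tp]]; split.
  by exists c; split => //; exact: in_simplex_retract_homotopy.
by exists p => //; apply: retract_homotopy_phiP.
Qed.

Lemma simplex_real_sub_phi_preim : sorted <%O s ->
  @simplex_real d P R s `<=` phi_preim s.
Proof.
move=> s_sorted t st; have [t_ge0 t_s sum_t] := st.
split; first by exists s; split => //; exact: sorted_lt_chain.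
have : has (fun q => t q != 0) s.
  apply: contraT => /hasPn t_s0; move: sum_t.
  rewrite big1_seq => [/eqP|q]; first by rewrite eq_sym oner_eq0.
  by rewrite mem_undup => /t_s0/negPn/eqP.
case/(chain_has_max (sorted_lt_chain s_sorted)) => p ps [tp p_max].
by exists p => //; split => // q tq; apply: p_max => //; apply: contraNT tq => /t_s ->.
Qed.

End phi_preim.

Lemma continuous_retract_homotopy (d : Order.disp_t) (P : porderType d) (R : realType)
    (s : seq P) :
  {within phi_preim s `*` `[0, 1], continuous (@retract_homotopy d P R s)}.
Proof.
have H_simplex (c : seq P) (t : realiz P R) (u : R) : is_chain c -> in_simplex c t ->
    0 < mass s t -> 0 <= u <= 1 -> in_simplex c (retract_homotopy s (t, u)).
  by move=> _ ct mt_gt0 u01; have [t_ge0 _ _] := ct; apply: in_simplex_retract_homotopy.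
have H_cvg (c : seq P) (t : realiz P R) (u : R) (p : P) : is_chain c -> in_simplex c t ->
    0 < mass s t -> (fun q : R * realiz P R => retract_homotopy s (q.2, q.1) p)
      @ filter_prod (nbhs u) (simplex_nbhs c t) --> retract_homotopy s (t, u) p.
  move=> _ ct mt_gt0; apply: cvg_retract_homotopy => //; last exact: cvg_fst.
  by move=> q; apply: cvg_comp cvg_snd (cvg_simplex_nbhs_coord ct).
apply: continuous_subspaceW
  (continuous_homotopy_simplexwise (open_mass_gt0 (s := s)) H_simplex H_cvg).
by apply: setSX => // t Bt; have [_ mt_gt0 _] := phi_preimP Bt; case: Bt.
Qed.

Lemma continuous_retraction (d : Order.disp_t) (P : porderType d) (R : realType)
    (s : seq P) :
  {within phi_preim s, continuous (fun t : realiz P R => retract_homotopy s (t, 0))}.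
Proof.
apply: continuous_in_subspaceT => t0 /set_mem /phi_preimP[_ mt0_gt0 _].
apply: (continuous_simplexwise (open_mass_gt0 (s := s))) => //.
  move=> c t _ ct mt_gt0; have [t_ge0 _ _] := ct.
  by apply: in_simplex_retract_homotopy; rewrite ?lexx ?ler01.
move=> c t p _ ct mt_gt0; apply: cvg_retract_homotopy => //; last exact: cvg_cst.
by move=> q; exact: cvg_simplex_nbhs_coord.
Qed.

Theorem lemma2p17 (d : Order.disp_t) (P : porderType d) (R : realType)
  (s : seq P) :
  s != [::] -> sorted (fun p q => (p < q)%O) s ->
  filtered_homotopy_equivalence (@simplex_real d P R s) (@phi_preim d P R s) id.
Proof.
move=> _ s_sorted; have AB := simplex_real_sub_phi_preim (R := R) s_sorted.
have H01 (u : R) : u \in `[0, 1] -> 0 <= u <= 1 by rewrite in_itv.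
split; first by split => //; apply: continuous_subspaceT => t; exact: cvg_id.
exists (fun t => retract_homotopy s (t, 0)); split.
- split; first exact: continuous_retraction.
  + by move=> t /phi_preimP[t_ge0 mt_gt0 _]; exact: in_simplex_retract.
  + by move=> t p Bt; apply: retract_homotopy_phi_preim; rewrite ?lexx ?ler01.
- exists (retract_homotopy s); split => //.
  + apply: continuous_subspaceW; last exact: continuous_retract_homotopy.
    by move=> [a u] [/AB].
  + move=> a u sa /H01 u01; have [a_ge0 _ sum_a] := sa.
    by apply: in_simplex_retract_homotopy; rewrite // /mass sum_a ltr01.
  + by move=> a u p /AB Ba /H01; exact: retract_homotopy_phi_preim.
  + by move=> a _; rewrite retract_homotopy1.
- exists (retract_homotopy s); split => //.
  + exact: continuous_retract_homotopy.
  + by move=> a u Ba /H01; exact: phi_preim_retract_homotopy.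
  + by move=> a u p Ba /H01; exact: retract_homotopy_phi_preim.
  + by move=> a _; rewrite retract_homotopy1.
Qed.
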